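(* Let $f:\mathbb{R}^d\times\mathbb{R}^d\to\mathbb{R}^d$ and $g:\mathbb{R}^d\times\mathbb{R}^d\to\mathbb{R}^{d\times m}$ satisfy: (i) for each $R>0$ there is $L_R>0$ such that $|f(x,y)-f(\bar x,\bar y)|\vee|g(x,y)-g(\bar x,\bar y)|\le L_R(|x-\bar x|+|y-\bar y|)$ whenever $|x|\vee|y|\vee|\bar x|\vee|\bar y|\le R$; (ii) there are constants $a_{ii}\in\mathbb{R}$, $a_{ij}\ge0$ for $i\ne j$, $b_{ij}\ge0$ such that for every $i\in\{1,\dots,d\}$ and all $x,y\in\mathbb{R}^d$: $2x_if_i(x,y)+\sum_{l=1}^m g_{il}(x,y)^2\le\sum_{j=1}^d a_{ij}x_j^2+\sum_{j=1}^d b_{ij}y_j^2$. Then for any fixed $\Delta\in(0,\Delta^* )$ there exist constants $a_{ii}\in\mathbb{R}$, $a_{ij}\ge0$ ($i\ne j$), $b_{ij}\ge0$ such that $$2x_if_{\Delta,i}(x,y)+\sum_{l=1}^m g_{\Delta,il}(x,y)^2\le\sum_{j=1}^d a_{ij}x_j^2+\sum_{j=1}^d b_{ij}y_j^2,\qquad i\in\{1,\dots,d\},$$ for all $x,y\in\mathbb{R}^d$, where $f_\Delta, g_\Delta$ are the modified truncated functions defined in the context.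
   Context: Let $\Delta^*>0$ and let $h:(0,\Delta^*]\to(0,\infty)$ be strictly decreasing with $\lim_{\Delta\to0}h(\Delta)=\infty$ and $\lim_{\Delta\to0}L_{h(\Delta)}^2\Delta=0$, where $L_R$ is the local Lipschitz constant above. For $\Delta\in(0,\Delta^* )$ the modified truncated function is $f_\Delta(x,y)=f(x,y)$ if $|x|\vee|y|\le h(\Delta)$ and $f_\Delta(x,y)=\frac{|x|\vee|y|}{h(\Delta)}f\big(\frac{h(\Delta)}{|x|\vee|y|}x,\frac{h(\Delta)}{|x|\vee|y|}y\big)$ if $|x|\vee|y|>h(\Delta)$; $g_\Delta$ is defined from $g$ in the same way. $f_{\Delta,i}$ and $g_{\Delta,il}$ denote components. *)

From HB Require Import structures.
From mathcomp Require Import all_boot all_order all_algebra.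
From mathcomp Require Import all_classical all_reals all_analysis.
Set Implicit Arguments. Unset Strict Implicit. Unset Printing Implicit Defensive.
Import Order.TTheory GRing.Theory Num.Theory.
Local Open Scope ring_scope.

(* Euclidean norm of a vector ('rV_d is a 1 x d matrix) / Frobenius
   (trace) norm of a matrix: sqrt of the sum of squares of the entries. *)
Definition enorm (R : realType) (p q : nat) (A : 'M[R]_(p, q)) : R :=
  Num.sqrt (\sum_(i < p) \sum_(j < q) A i j ^+ 2).

Definition mtrunc (R : realType) (d : nat) (V : lmodType R)
    (hD : R) (F : 'rV[R]_d -> 'rV[R]_d -> V) (x y : 'rV[R]_d) : V :=
  let M := Num.max (enorm x) (enorm y) in
  if M <= hD then F x y else (M / hD) *: F ((hD / M) *: x) ((hD / M) *: y).

(* Condition (ii) is homogeneous of degree 2 in (x, y, f, g) jointly, and outside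
   the ball of radius h(Delta) the truncated pair is exactly such a rescaling of
   (f, g): with c = h(Delta) / (|x| v |y|), one has f_Delta(x, y) = c^-1 f(c x, c y).
   Hence the truncated pair satisfies (ii) with the original constants a, b. *)
From HB Require Import structures.
From mathcomp Require Import all_boot all_order all_algebra.
From mathcomp Require Import all_classical all_reals all_analysis.
From mathcomp Require Import ring.

Set Implicit Arguments.
Unset Strict Implicit.
Unset Printing Implicit Defensive.
Import Order.TTheory GRing.Theory Num.Theory.
Local Open Scope classical_set_scope.
Local Open Scope ring_scope.

Section StructuralCondition.
Variables (R : realType) (d m : nat).
Implicit Types (x y F : 'rV[R]_d) (G : 'M[R]_(d, m)) (k : R) (i : 'I_d).

Definition drift_diffusion_form x F G i : R :=
  2 * x ord0 i * F ord0 i + \sum_(l < m) G i l ^+ 2.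

Definition quadratic_majorant (a b : 'M[R]_d) x y i : R :=
  \sum_(j < d) a i j * x ord0 j ^+ 2 + \sum_(j < d) b i j * y ord0 j ^+ 2.

Lemma drift_diffusion_formZ k x F G i :
  drift_diffusion_form (k *: x) (k *: F) (k *: G) i
  = k ^+ 2 * drift_diffusion_form x F G i.
Proof.
rewrite /drift_diffusion_form !mxE mulrDr big_distrr /=; congr (_ + _).
  by ring.
by apply: eq_bigr => l _; rewrite mxE exprMn.
Qed.

Lemma quadratic_majorantZ a b k x y i :
  quadratic_majorant a b (k *: x) (k *: y) i
  = k ^+ 2 * quadratic_majorant a b x y i.
Proof.
rewrite /quadratic_majorant mulrDr !big_distrr /=.
by congr (_ + _); apply: eq_bigr => j _; rewrite mxE exprMn mulrCA.
Qed.

Lemma structural_condition_rescale a b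
    (f : 'rV[R]_d -> 'rV[R]_d -> 'rV[R]_d) (g : 'rV[R]_d -> 'rV[R]_d -> 'M[R]_(d, m))
    (c : R) :
  (forall i x y, drift_diffusion_form x (f x y) (g x y) i <= quadratic_majorant a b x y i) ->
  c != 0 ->
  forall i x y,
    drift_diffusion_form x (c^-1 *: f (c *: x) (c *: y)) (c^-1 *: g (c *: x) (c *: y)) i
    <= quadratic_majorant a b x y i.
Proof.
move=> Hfg c0 i x y.
have -> : quadratic_majorant a b x y i
    = c^-1 ^+ 2 * quadratic_majorant a b (c *: x) (c *: y) i.
  by rewrite -quadratic_majorantZ !scalerK.
rewrite -{1}(scalerK c0 x) drift_diffusion_formZ.
by apply: ler_wpM2l; [exact: sqr_ge0 | exact: Hfg].
Qed.

Lemma mtrunc_rescaled (hD : R) x y : 0 < hD ->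
  exists2 c : R, c != 0 &
    forall (V : lmodType R) (F : 'rV[R]_d -> 'rV[R]_d -> V),
      mtrunc hD F x y = c^-1 *: F (c *: x) (c *: y).
Proof.
move=> hD0; rewrite /mtrunc; set M := Num.max _ _.
have [_|hM] := leP M hD.
  by exists 1 => [|V F]; rewrite ?oner_eq0 // invr1 !scale1r.
have M0 : 0 < M by exact: lt_trans hM.
exists (hD / M) => [|V F]; first by rewrite mulf_neq0 ?invr_eq0 ?gt_eqF.
by rewrite invf_div.
Qed.

End StructuralCondition.

Theorem lemma4p1 (R : realType) (d m : nat)
  (f : 'rV[R]_d -> 'rV[R]_d -> 'rV[R]_d)
  (g : 'rV[R]_d -> 'rV[R]_d -> 'M[R]_(d, m))
  (L : R -> R)
  (* (i) local Lipschitz condition with constants L_R *)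
  (HL : forall r : R, 0 < r -> 0 < L r /\
     forall x y xb yb : 'rV[R]_d,
       Num.max (Num.max (enorm x) (enorm y)) (Num.max (enorm xb) (enorm yb)) <= r ->
       Num.max (enorm (f x y - f xb yb)) (enorm (g x y - g xb yb))
         <= L r * (enorm (x - xb) + enorm (y - yb)))
  (* (ii) the structural condition *)
  (a b : 'M[R]_d)
  (Ha : forall i j : 'I_d, i != j -> 0 <= a i j)
  (Hb : forall i j : 'I_d, 0 <= b i j)
  (Hfg : forall (i : 'I_d) (x y : 'rV[R]_d),
     2 * x ord0 i * f x y ord0 i + \sum_(l < m) (g x y i l) ^+ 2
       <= \sum_(j < d) a i j * x ord0 j ^+ 2 + \sum_(j < d) b i j * y ord0 j ^+ 2)
  (* the truncation function h on (0, Delta*] *)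
  (Dstar : R) (HDstar : 0 < Dstar) (h : R -> R)
  (hpos : forall D, 0 < D -> D <= Dstar -> 0 < h D)
  (hdecr : forall D1 D2, 0 < D1 -> D1 < D2 -> D2 <= Dstar -> h D2 < h D1)
  (hlim : h D @[D --> 0^'+] --> +oo)
  (hLlim : (L (h D)) ^+ 2 * D @[D --> 0^'+] --> 0)
  (D : R) (HD0 : 0 < D) (HD1 : D < Dstar) :
  exists a' b' : 'M[R]_d,
    (forall i j : 'I_d, i != j -> 0 <= a' i j) /\
    (forall i j : 'I_d, 0 <= b' i j) /\
    (forall (i : 'I_d) (x y : 'rV[R]_d),
       2 * x ord0 i * mtrunc (h D) f x y ord0 i
         + \sum_(l < m) (mtrunc (h D) g x y i l) ^+ 2
       <= \sum_(j < d) a' i j * x ord0 j ^+ 2 + \sum_(j < d) b' i j * y ord0 j ^+ 2).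
Proof.
exists a, b; split; first exact: Ha; split; first exact: Hb.
move=> i x y.
have hD0 : 0 < h D by apply: hpos => //; exact: ltW.
have [c c0 trunc_eq] := mtrunc_rescaled x y hD0.
rewrite !trunc_eq.
exact: (structural_condition_rescale Hfg c0).
Qed.
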